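(* With $B_n,P_n$ as in the context, let $L_n=|B_n|$, $c_n$ the number of $1$'s in $B_n$, $m_n=|P_n|$ and $o_n$ the number of $1$'s in $P_n$. Assume that the limit $d=\lim_{n\to\infty}c_n/L_n$ exists and $d\neq 1/2$. Then the limit $\delta=\lim_{n\to\infty}o_n/m_n$ exists and $\delta=d$.
   Context: Generation operator: for a finite vector $R=\langle r_1,\dots,r_m\rangle$ of positive integers and $s\in\{1,3\}$, $\mathcal{G}(R,s)= s^{r_1}\,(4-s)^{r_2}\,s^{r_3}\cdots$ (the $i$-th run consists of $r_i$ copies of $s$ if $i$ is odd and of $4-s$ if $i$ is even), of length $\sum_i r_i$. For a finite word $W$ over $\{1,3\}$, $R(W)$ denotes $W$ itself regarded as a vector of positive integers. Define $B_1=\mathcal{G}(\langle 1,3,3,3,1\rangle,1)=1\,3\,3\,3\,1\,1\,1\,3\,3\,3\,1$, $P_1=3$, and for $n\ge1$: $B_{n+1}=B_n\,P_n\,B_n$ (concatenation), $P_{n+1}=\mathcal{G}(R(P_n),3)$. *)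

From mathcomp Require Import all_boot.
Set Implicit Arguments. Unset Strict Implicit. Unset Printing Implicit Defensive.

(* Generation operator G(R,s): the i-th run (1-indexed) has r_i copies of s if i
   is odd and of 4-s if i is even. Words over {1,3} are seq nat; R(W) is W itself. *)
Fixpoint gen (R : seq nat) (s : nat) : seq nat :=
  match R with
  | [::] => [::]
  | r :: R' => nseq r s ++ gen R' (4 - s)
  end.

Definition B1 : seq nat := gen [:: 1; 3; 3; 3; 1] 1.

(* BP k = (B_{k+1}, P_{k+1}) : index shifted by one so that k ranges over nat. *)
Fixpoint BP (k : nat) : seq nat * seq nat :=
  match k with
  | 0 => (B1, [:: 3])
  | k'.+1 => let: (b, p) := BP k' in (b ++ p ++ b, gen p 3)
  end.

Definition Bw (k : nat) : seq nat := (BP k).1.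
Definition Pw (k : nat) : seq nat := (BP k).2.

Definition Ln (k : nat) : nat := size (Bw k).
Definition cn (k : nat) : nat := count_mem 1 (Bw k).
Definition mn (k : nat) : nat := size (Pw k).
Definition on (k : nat) : nat := count_mem 1 (Pw k).

Lemma B1_eq : B1 = [:: 1; 3; 3; 3; 1; 1; 1; 3; 3; 3; 1].
Proof. by []. Qed.

(* Every B_n is P_{n+2} framed by two 1's.  Indeed all P_n have odd length,
   so G(., 3) maps P_{n+2} = P_{n+1} 1 P_{n-1} 1 P_{n+1} to
   P_{n+3} = P_{n+2} 1 P_n 1 P_{n+2}, and then B_{n+1} = B_n P_n B_n unfolds to
   1 P_{n+3} 1.  Hence m_{n+2} = L_n - 2 and o_{n+2} = c_n - 2, and dropping two
   letters does not change the limiting density since L_n grows without bound. *)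
From mathcomp Require Import all_boot zify.

Lemma gen_cat (R1 R2 : seq nat) (s : nat) : s <= 4 ->
  gen (R1 ++ R2) s = gen R1 s ++ gen R2 (if odd (size R1) then 4 - s else s).
Proof.
elim: R1 s => [|r R1 IH] s hs //=.
rewrite IH ?leq_subr // -catA; congr (_ ++ _ ++ gen R2 _).
by case: (odd (size R1)); rewrite //= subKn.
Qed.

Lemma PwS k : Pw k.+1 = gen (Pw k) 3.
Proof. by rewrite /Pw /=; case: (BP k). Qed.

Lemma BwS k : Bw k.+1 = Bw k ++ Pw k ++ Bw k.
Proof. by rewrite /Bw /Pw /=; case: (BP k). Qed.

Lemma Pw_recursion k :
  [/\ Pw k.+3 = Pw k.+2 ++ 1 :: Pw k ++ 1 :: Pw k.+2,
      odd (size (Pw k)), odd (size (Pw k.+1)) & odd (size (Pw k.+2))].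
Proof.
elim: k => [|k [IH odd0 odd1 odd2]]; first by split; vm_compute.
have odd3 : odd (size (Pw k.+3)).
  by rewrite IH size_cat /= size_cat /= !oddD /= oddD /= odd0 odd2.
split=> //.
by rewrite PwS IH gen_cat // odd2 /= PwS gen_cat // odd0 /= -!PwS -IH.
Qed.

Lemma Bw_framed k : Bw k = 1 :: Pw k.+2 ++ [:: 1].
Proof.
elim: k => [|k IH]; first by vm_compute.
have [PwSSS _ _ _] := Pw_recursion k.
by rewrite BwS IH PwSSS /= -!catA /= -!catA.
Qed.

Lemma Ln_mn k : Ln k = (mn k.+2).+2.
Proof. by rewrite /Ln /mn Bw_framed /= size_cat addn1. Qed.

Lemma cn_on k : cn k = (on k.+2).+2.
Proof. by rewrite /cn /on Bw_framed /= count_cat /= addn0 addn1. Qed.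

Lemma leq_Ln k : k <= Ln k.
Proof.
elim: k => [|k IH] //; have := Ln_mn k.
rewrite /Ln BwS !size_cat -/(Ln k); lia.
Qed.

From Stdlib Require Import Reals Lra.
Open Scope R_scope.

Lemma Un_cv_ext (u v : nat -> R) (l : R) :
  (forall k, u k = v k) -> Un_cv u l -> Un_cv v l.
Proof.
intros Huv Hu eps Heps; destruct (Hu eps Heps) as [N HN].
exists N; intros k Hk; rewrite <- Huv; exact (HN k Hk).
Qed.

Lemma ratio_sub_gap (c L a : R) :
  0 <= a < L -> 0 <= c <= L -> Rabs ((c - a) / (L - a) - c / L) <= a / (L - a).
Proof.
intros [Ha HaL] [Hc HcL].
assert (HL : 0 < / L) by (apply Rinv_0_lt_compat; lra).
assert (Hq : 0 <= c / L <= 1).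
{ unfold Rdiv; split; [nra|].
  rewrite <- (Rinv_r L) by lra; apply Rmult_le_compat_r; lra. }
assert (Hg : 0 <= a / (L - a)).
{ unfold Rdiv; assert (0 < / (L - a)) by (apply Rinv_0_lt_compat; lra); nra. }
replace ((c - a) / (L - a) - c / L) with (- (a / (L - a) * (1 - c / L)))
  by (field; lra).
rewrite Rabs_Ropp Rabs_right; nra.
Qed.

Lemma Un_cv_ratio_sub (c L : nat -> R) (a d : R) :
  0 <= a -> (forall k, 0 <= c k <= L k) -> cv_infty L ->
  Un_cv (fun k => c k / L k) d ->
  Un_cv (fun k => (c k - a) / (L k - a)) d.
Proof.
intros Ha Hc HL Hu eps Heps.
destruct (Hu (eps / 2)) as [N1 HN1]; [lra|].
destruct (HL (a + 2 * a / eps)) as [N2 HN2].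
exists (Nat.max N1 N2); intros k Hk; unfold R_dist in *.
specialize (HN1 k ltac:(lia)); specialize (HN2 k ltac:(lia)).
assert (Hinv : 0 < / eps) by (apply Rinv_0_lt_compat; lra).
assert (Hcancel : eps * / eps = 1) by (apply Rinv_r; lra).
assert (HaL : a < L k) by (unfold Rdiv in HN2; nra).
assert (Hgap : a / (L k - a) < eps / 2).
{ assert (0 < / (L k - a)) by (apply Rinv_0_lt_compat; lra).
  assert ((L k - a) * / (L k - a) = 1) by (apply Rinv_r; lra).
  unfold Rdiv in *; nra. }
pose proof (ratio_sub_gap (c k) (L k) a (conj Ha HaL) (Hc k)).
pose proof (Rabs_triang ((c k - a) / (L k - a) - c k / L k) (c k / L k - d)).
replace ((c k - a) / (L k - a) - d)
  with (((c k - a) / (L k - a) - c k / L k) + (c k / L k - d)) by ring.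
lra.
Qed.

Lemma cv_infty_INR (u : nat -> nat) :
  (forall k, (k <= u k)%nat) -> cv_infty (fun k => INR (u k)).
Proof.
intros Hu M; destruct (INR_unbounded M) as [N HN].
exists N; intros k Hk.
apply Rlt_le_trans with (INR N); [lra|].
apply le_INR; specialize (Hu k); lia.
Qed.

Theorem theorem5p3 (d : R) :
  Un_cv (fun k => INR (cn k) / INR (Ln k)) d ->
  d <> 1 / 2 ->
  Un_cv (fun k => INR (on k) / INR (mn k)) d.
Proof.
intros Hcv _.
apply CV_shift with 2%nat.
apply Un_cv_ext with (fun k => (INR (cn k) - 2) / (INR (Ln k) - 2)).
{ intros k; rewrite Nat.add_comm cn_on Ln_mn !S_INR /=; f_equal; ring. }
apply Un_cv_ratio_sub; [lra | | exact (cv_infty_INR Ln leq_Ln) | exact Hcv].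
intros k; split; [apply pos_INR | apply le_INR; apply/leP; exact: count_size].
Qed.
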